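(* For any positive integer $n$, $\chi_{ld}(F_n+B_{n,n})=2n+5$.
   Context: All graphs are finite, simple and undirected. For a graph $G=(V,E)$ of order $N$ without isolated vertices, a bijection $f\colon V\to\{1,2,\dots,N\}$ is a local distance antimagic labeling if $w(u)\neq w(v)$ for every edge $uv$, where $w(u)=\sum_{x\in N(u)}f(x)$ and $N(u)$ is the open neighborhood of $u$. $\chi_{ld}(G)$ is the minimum number of distinct values of $w$ over all local distance antimagic labelings of $G$. The friendship graph $F_n$ consists of $n$ triangles sharing one common vertex. The bistar $B_{n,n}$ has vertices $a,b,x_1,\dots,x_n,y_1,\dots,y_n$ with edges $ab$, $ax_i$ and $by_i$ ($1\le i\le n$). $G+H$ is the join: the disjoint union of $G$ and $H$ plus all edges between $V(G)$ and $V(H)$. *)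

From mathcomp Require Import all_boot.
Set Implicit Arguments. Unset Strict Implicit. Unset Printing Implicit Defensive.

Definition simple_graph (V : finType) (e : rel V) : Prop :=
  symmetric e /\ irreflexive e.

Definition no_isolated (V : finType) (e : rel V) : Prop :=
  forall u : V, exists v : V, e u v.

Definition weight (V : finType) (e : rel V) (f : V -> nat) (u : V) : nat :=
  \sum_(x : V | e u x) f x.

Definition bij_labeling (V : finType) (f : V -> nat) : Prop :=
  [/\ forall v, 1 <= f v <= #|V|,
      injective f &
      forall k, 1 <= k <= #|V| -> exists v, f v = k].

Definition ld_antimagic (V : finType) (e : rel V) (f : V -> nat) : Prop :=
  bij_labeling f /\ forall u v, e u v -> weight e f u <> weight e f v.

Definition num_weights (V : finType) (e : rel V) (f : V -> nat) : nat :=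
  size (undup [seq weight e f u | u <- enum V]).

Definition chi_ld_is (V : finType) (e : rel V) (k : nat) : Prop :=
  (exists f, ld_antimagic e f /\ num_weights e f = k) /\
  (forall f, ld_antimagic e f -> k <= num_weights e f).

(* Friendship graph F_n: center = None, triangle i has vertices Some (i,false),
   Some (i,true). *)
Definition friend_V (n : nat) : finType := option ('I_n * bool).
Definition friend_e (n : nat) : rel (friend_V n) :=
  fun u v => match u, v with
  | None, Some _ => true
  | Some _, None => true
  | Some (i, b), Some (j, c) => (i == j) && (b != c)
  | None, None => false
  end.

Arguments friend_e n : clear implicits.

(* Bistar B_{n,n}: a = inl false, b = inl true, x_i = inr (i,false),
   y_i = inr (i,true). Edges ab, a x_i, b y_i. *)
Definition bistar_V (n : nat) : finType := (bool + ('I_n * bool))%type.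
Definition bistar_e (n : nat) : rel (bistar_V n) :=
  fun u v => match u, v with
  | inl b, inl c => b != c
  | inl b, inr (_, c) => b == c
  | inr (_, c), inl b => b == c
  | inr _, inr _ => false
  end.

Arguments bistar_e n : clear implicits.

Definition join_e (V W : finType) (e : rel V) (g : rel W) : rel (V + W)%type :=
  fun u v => match u, v with
  | inl x, inl y => e x y
  | inr x, inr y => g x y
  | _, _ => true
  end.

Definition FB_V (n : nat) : finType := (friend_V n + bistar_V n)%type.
Definition FB_e (n : nat) : rel (FB_V n) := join_e (friend_e n) (bistar_e n).
Arguments FB_e n : clear implicits.

From mathcomp Require Import all_boot zify.
Set Implicit Arguments. Unset Strict Implicit. Unset Printing Implicit Defensive.

(* For non-adjacent vertices,
   injectivity of the labeling shows that equal weights occur only for the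
   pendants x_1, ..., x_n (which all have neighbourhood V(F_n) + a) and for the
   pendants y_1, ..., y_n.  Hence EVERY local distance antimagic labeling has
   exactly (4n + 3) - 2(n - 1) = 2n + 5 distinct weights, and it only remains
   to exhibit one such labeling. *)

Lemma big_option (T : finType) (P : pred (option T)) (F : option T -> nat) :
  \sum_(x | P x) F x = (if P None then F None else 0) + \sum_(x | P (Some x)) F (Some x).
Proof.
rewrite ![index_enum _]unlock [@Finite.enum in LHS]unlock /= big_cons big_map.
by case: (P None).
Qed.

Lemma sum_pair_bool (I : finType) (F : I * bool -> nat) :
  \sum_(p : I * bool) F p = \sum_(i : I) F (i, true) + \sum_(i : I) F (i, false).
Proof.
rewrite (eq_bigr (fun p => F (p.1, p.2))) => [|[] //].
by rewrite -(pair_bigA _ (fun i b => F (i, b))) -big_split; apply: eq_bigr => i _; rewrite big_bool.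
Qed.

Lemma sum_pair_snd (I J : finType) (j : J) (F : I * J -> nat) :
  \sum_(p : I * J | p.2 == j) F p = \sum_(i : I) F (i, j).
Proof.
transitivity (\sum_(i : I) \sum_(k : J | k == j) F (i, k)).
  by rewrite pair_big; apply: eq_big => -[].
by apply: eq_bigr => i _; rewrite big_pred1_eq.
Qed.

Lemma sum_double_add n k : \sum_(i < n) (2 * i + k) + n = n ^ 2 + k * n.
Proof.
elim: n => [|n IHn]; first by rewrite big_ord0 muln0.
rewrite big_ord_recr /=; move: IHn; move: (\sum_(i < n) _) => s; nia.
Qed.

Lemma bij_labeling_of_inj (V : finType) (f : V -> nat) :
  (forall v, 1 <= f v <= #|V|) -> injective f -> bij_labeling f.
Proof.
move=> f_range f_inj; split=> // k k_range.
have f_sub : {subset map f (enum V) <= iota 1 #|V|}.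
  by move=> _ /mapP[v _ ->]; rewrite mem_iota; have := f_range v; lia.
have f_uniq : uniq (map f (enum V)) by rewrite map_inj_uniq ?enum_uniq.
have f_size : size (iota 1 #|V|) <= size (map f (enum V)).
  by rewrite size_map size_iota cardE.
have [_ f_onto] := uniq_min_size f_uniq f_sub f_size.
have : k \in iota 1 #|V| by rewrite mem_iota; lia.
by rewrite -f_onto => /mapP[v _ ->]; exists v.
Qed.

Lemma num_weights_transversal (V W : finType) (e : rel V) (f : V -> nat) (g : W -> V) :
  injective (weight e f \o g) -> (forall u, exists x, weight e f u = weight e f (g x)) ->
  num_weights e f = #|W|.
Proof.
move=> wg_inj wg_onto; rewrite /num_weights cardE -(size_map (weight e f \o g) (enum W)).
apply/perm_size/uniq_perm => [|| x]; first exact: undup_uniq.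
  by rewrite map_inj_uniq ?enum_uniq.
rewrite mem_undup; apply/mapP/mapP => -[u _ ->]; last by exists (g u); rewrite ?mem_enum.
by have [y ->] := wg_onto u; exists y; rewrite ?mem_enum.
Qed.

Local Notation center := (inl None).
Local Notation leaf i b := (inl (Some (i, b))).
Local Notation hub c := (inr (inl c)).
Local Notation pendant i c := (inr (inr (i, c))).

Section FBWeights.

Variables (n : nat) (f : FB_V n -> nat).
Local Notation w := (weight (FB_e n) f).

Definition leaf_sum := \sum_(p : 'I_n * bool) f (inl (Some p)).
Definition friend_sum := f center + leaf_sum.
Definition pendant_sum c := \sum_(i < n) f (pendant i c).
Definition bistar_sum :=
  f (hub true) + f (hub false) + pendant_sum true + pendant_sum false.

Lemma weight_inl x : w (inl x) = \sum_(y | friend_e n x y) f (inl y) + bistar_sum.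
Proof.
rewrite /weight big_sumType /= /bistar_sum big_sumType big_bool /= -!addnA.
by rewrite (sum_pair_bool (fun p => f (inr (inr p)))).
Qed.

Lemma weight_inr y : w (inr y) = friend_sum + \sum_(z | bistar_e n y z) f (inr z).
Proof. by rewrite /weight big_sumType /= big_option. Qed.

Lemma weight_center : w center = leaf_sum + bistar_sum.
Proof. by rewrite weight_inl big_option. Qed.

Lemma weight_leaf i b : w (leaf i b) = f center + f (leaf i (~~ b)) + bistar_sum.
Proof.
rewrite weight_inl big_option /= (big_pred1 (i, ~~ b)) // => -[j c] /=.
by rewrite xpair_eqE eq_sym; case: b; case: c; rewrite ?andbT ?andbF.
Qed.

Lemma weight_hub c : w (hub c) = friend_sum + f (hub (~~ c)) + pendant_sum c.
Proof.
rewrite weight_inr big_sumType /= -addnA (big_pred1 (~~ c)); last by case: c => -[].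
rewrite /pendant_sum -(sum_pair_snd c (fun p => f (inr (inr p)))).
by congr (_ + (_ + _)); apply: eq_bigl => -[i d] /=; rewrite eq_sym.
Qed.

Lemma weight_pendant i c : w (pendant i c) = friend_sum + f (hub c).
Proof.
rewrite weight_inr big_sumType /= (big_pred1 c) => [|d /=]; last by rewrite eq_sym.
by rewrite big_pred0 ?addn0 // => -[].
Qed.

End FBWeights.

Section AntimagicWeights.

Variables (n : nat) (f : FB_V n -> nat).
Hypotheses (n_gt0 : 0 < n) (f_am : ld_antimagic (FB_e n) f).
Local Notation w := (weight (FB_e n) f).

Lemma pendant_sum_gt0 c : 0 < pendant_sum f c.
Proof.
have [[f_range _ _] _] := f_am.
rewrite /pendant_sum (bigD1 (Ordinal n_gt0)) //= addn_gt0.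
by case/andP: (f_range (pendant (Ordinal n_gt0) c)) => ->.
Qed.

Lemma FB_weight_eq u v : w u = w v ->
  u = v \/ exists i j c, u = pendant i c /\ v = pendant j c.
Proof.
have [[_ f_inj _] w_adj] := f_am.
move=> w_uv; have /negP nadj_uv : ~~ FB_e n u v by apply/negP => /w_adj.
case: u w_uv nadj_uv => [[[i b]|]|[c|[i c]]]; case: v => [[[j d]|]|[e|[j e]]] //=;
  rewrite ?weight_leaf ?weight_hub ?weight_pendant => w_uv nadj_uv.
- by move/eqP: w_uv; rewrite eqn_add2r eqn_add2l => /eqP/f_inj[-> /negb_inj->]; left.
- by left.
- by move/negP/negPn/eqP: nadj_uv => ->; left.
- have e_eq : e = ~~ c by case: c e nadj_uv {w_uv} => -[].
  by move: w_uv (pendant_sum_gt0 c); rewrite e_eq -[X in _ = X]addn0 => /addnI->.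
- have c_eq : c = ~~ e by case: c e nadj_uv {w_uv} => -[].
  by move: w_uv (pendant_sum_gt0 e); rewrite c_eq -[X in X = _]addn0 => /esym/addnI->.
- by move/addnI/f_inj: w_uv => -[->]; right; exists i, j, e.
Qed.

Lemma num_weights_FB : num_weights (FB_e n) f = 2 * n + 5.
Proof.
pose i0 := Ordinal n_gt0.
pose rep (x : friend_V n + (bool + bool)) : FB_V n :=
  match x with inl y => inl y | inr (inl c) => hub c | inr (inr c) => pendant i0 c end.
rewrite (@num_weights_transversal _ _ _ _ rep).
- by rewrite card_sum card_option card_prod card_ord !card_sum card_bool; lia.
- move=> x y /FB_weight_eq[rep_xy | [i [j [c [rep_x rep_y]]]]].
    by case: x y rep_xy => [x|[c|c]] [y|[d|d]] // [->].
  by case: x y rep_x rep_y => [x|[a|a]] [y|[b|b]] // [_ ->] [_ ->].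
- case=> [x|[c|[i c]]]; first by exists (inl x).
    by exists (inr (inl c)).
  by exists (inr (inr c)); rewrite !weight_pendant.
Qed.

End AntimagicWeights.

(* The smallest labels go to F_n, so that every weight on F_n (at least
   6n^2 + 11n + 8) exceeds every weight on B_{n,n} (at most 5n^2 + 9n + 4);
   this settles all the edges of the join at once. *)
Definition FB_label n (u : FB_V n) : nat :=
  match u with
  | center => 1
  | leaf i b => 2 * i + 2 + b
  | hub c => 2 * n + 2 + ~~ c
  | pendant i c => 2 * i + 2 * n + 4 + c
  end.

Lemma FB_label_bij n : bij_labeling (@FB_label n).
Proof.
apply: bij_labeling_of_inj.
  rewrite card_sum card_option !card_sum !card_prod card_ord card_bool.
  by case=> [[[i b]|]|[c|[i c]]] /=; try have := ltn_ord i; lia.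
move=> [[[i b]|]|[c|[i c]]] [[[j d]|]|[e|[j e]]] //= eq_uv;
  try have i_lt := ltn_ord i; try have j_lt := ltn_ord j; try lia.
- have -> : b = d by case: b d eq_uv => -[]; lia.
  by have /ord_inj-> : i = j :> nat by lia.
- by case: c e eq_uv => [] [] //=; lia.
- have -> : c = e by case: c e eq_uv => -[]; lia.
  by have /ord_inj-> : i = j :> nat by lia.
Qed.

Section FBLabel.

Variable n : nat.
Local Notation g := (@FB_label n).
Local Notation w := (weight (FB_e n) g).

Lemma leaf_sum_label : leaf_sum g = 2 * n ^ 2 + 3 * n.
Proof.
have leaf_half b : \sum_(i < n) g (leaf i b) + n = n ^ 2 + (2 + b) * n.
  by rewrite -sum_double_add; congr (_ + _); apply: eq_bigr => i _ /=; rewrite addnA.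
rewrite /leaf_sum (sum_pair_bool (fun p => g (inl (Some p)))).
move: (leaf_half true) (leaf_half false) => /=.
move: (\sum_(i < n) _) (\sum_(i < n) _) => s1 s2; lia.
Qed.

Lemma pendant_sum_label c : pendant_sum g c = 3 * n ^ 2 + (3 + c) * n.
Proof.
rewrite /pendant_sum (eq_bigr (fun i : 'I_n => 2 * i + (2 * n + 4 + c))) => [|i _].
  by have := sum_double_add n (2 * n + 4 + c); move: (\sum_(i < n) _) => s; nia.
by rewrite /= !addnA.
Qed.

Lemma friend_sum_label : friend_sum g = 2 * n ^ 2 + 3 * n + 1.
Proof. by rewrite /friend_sum leaf_sum_label /= addnC. Qed.

Lemma bistar_sum_label : bistar_sum g = 6 * n ^ 2 + 11 * n + 5.
Proof. by rewrite /bistar_sum !pendant_sum_label /=; nia. Qed.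

Lemma weight_label_center : w center = 8 * n ^ 2 + 14 * n + 5.
Proof. by rewrite weight_center leaf_sum_label bistar_sum_label; lia. Qed.

Lemma weight_label_leaf i b : w (leaf i b) = 6 * n ^ 2 + 11 * n + 8 + 2 * i + ~~ b.
Proof. by rewrite weight_leaf bistar_sum_label /=; case: b; lia. Qed.

Lemma weight_label_hub c : w (hub c) = 5 * n ^ 2 + 8 * n + 3 + c * n.+1.
Proof. by rewrite weight_hub friend_sum_label pendant_sum_label /=; case: c; lia. Qed.

Lemma weight_label_pendant i c : w (pendant i c) = 2 * n ^ 2 + 5 * n + 3 + ~~ c.
Proof. by rewrite weight_pendant friend_sum_label /=; lia. Qed.

Lemma FB_label_antimagic : 0 < n -> ld_antimagic (FB_e n) g.
Proof.
move=> n_gt0; split=> [|u v]; first exact: FB_label_bij.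
case: u => [[[i b]|]|[c|[i c]]]; case: v => [[[j d]|]|[e|[j e]]] //=;
  rewrite ?weight_label_center ?weight_label_leaf ?weight_label_hub ?weight_label_pendant;
  try have i_lt := ltn_ord i; try have j_lt := ltn_ord j; nia.
Qed.

End FBLabel.

Theorem mainTheorem4 (n : nat) : 0 < n -> chi_ld_is (FB_e n) (2 * n + 5).
Proof.
move=> n_gt0; split=> [|f f_am]; last by rewrite num_weights_FB.
exists (@FB_label n); split; first exact: FB_label_antimagic.
exact: num_weights_FB (FB_label_antimagic n_gt0).
Qed.
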